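(* Consider a game in which Constructor and Blocker alternately claim unclaimed edges of $K_n$ (with Constructor possibly subject to restrictions on which edges she may claim). Assume that Blocker always answers each move of Constructor by claiming an unclaimed edge with both endpoints in the connected component of Constructor's graph containing the edge Constructor just claimed, whenever such an unclaimed edge exists. If at the end of the game some connected component $C$ of Constructor's graph has $r$ vertices, then at least $$\frac{\binom{r}{2}-\lfloor r/2\rfloor}{2}$$ of the edges of $K_n$ between vertices of $C$ are not claimed by Constructor.
   Context: Constructor's graph is the graph on $V(K_n)$ whose edges are those claimed by Constructor. *)

From mathcomp Require Import all_boot.
Set Implicit Arguments. Unset Strict Implicit. Unset Printing Implicit Defensive.

(* Vertices of K_n are 'I_n; an edge of K_n is a 2-element subset of 'I_n.
   A graph on V(K_n) is a set G of such edges. *)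

Definition gadj (n : nat) (G : {set {set 'I_n}}) : rel 'I_n :=
  fun x y => (x != y) && ([set x; y] \in G).

Definition vcomp (n : nat) (G : {set {set 'I_n}}) (x : 'I_n) : {set 'I_n} :=
  [set y | connect (gadj G) x y].

Definition compE (n : nat) (G : {set {set 'I_n}}) (e : {set 'I_n}) : {set 'I_n} :=
  [set y | [exists x in e, connect (gadj G) x y]].

(* A play is a sequence s of edges, claimed in order; the players alternate,
   and cstart says whether Constructor makes the first move.
   Move number i (0-based) is Constructor's iff isC cstart i. *)
Definition isC (cstart : bool) (i : nat) : bool := cstart == ~~ odd i.

Definition claimed (n : nat) (s : seq {set 'I_n}) (k : nat) : {set {set 'I_n}} :=
  [set e in take k s].

Definition cgraph (n : nat) (cstart : bool) (s : seq {set 'I_n}) (k : nat)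
  : {set {set 'I_n}} :=
  [set nth set0 s (val i) | i : 'I_(size s) & (val i < k) && isC cstart i].

(* legal play of the edge-claiming game on K_n: every move claims an edge of
   K_n that was unclaimed *)
Definition valid_play (n : nat) (s : seq {set 'I_n}) : Prop :=
  uniq s /\ (forall e, e \in s -> #|e| = 2).

Definition blocker_rule (n : nat) (cstart : bool) (s : seq {set 'I_n}) : Prop :=
  forall i : nat, i.+1 < size s -> isC cstart i ->
    let K := compE (cgraph cstart s i.+1) (nth set0 s i) in
    (exists f : {set 'I_n},
        [&& #|f| == 2, f \subset K & f \notin claimed s i.+1]) ->
    nth set0 s i.+1 \subset K.

From mathcomp Require Import all_boot zify.
Set Implicit Arguments. Unset Strict Implicit. Unset Printing Implicit Defensive.

(* Call a vertex set K closed when it is a union of components of Constructor's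
   graph, and let c(K), b(K) count Constructor's and Blocker's edges inside K.
   Along the play every closed K satisfies c(K) <= b(K) + |K|/2 + p(K), where
   p(K) (pending) is 1 exactly when Constructor's last edge lies in K and
   Blocker can still answer it inside its component; Blocker's answer pays
   off p(K).  When Constructor's edge completes a component L that has no
   unclaimed pair left, c(L) + b(L) = C(|L|,2); as C(|L|,2) and |L|/2 have the
   same parity, the bound c(L) - 1 <= b(L) + |L|/2 inherited from before the
   move cannot be tight, so it absorbs the new edge.  At the end of the play
   p(C) is at most the number of unclaimed pairs in C, and counting the pairs
   of C gives the claim. *)

Lemma odd_bin2 l : odd 'C(l, 2) = odd l./2.
Proof.
suff : odd 'C(l, 2) = odd l./2 /\ odd 'C(l.+1, 2) = odd l.+1./2 by case.
elim: l => [|l [IH1 IH2]] //; split => //.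
by rewrite binS binS !bin1 !oddD IH1 /=; case: (odd l); case: (odd l./2).
Qed.

Lemma bin2_parity_lt c b l : c + b + 1 = 'C(l, 2) -> c <= b + l./2 -> c < b + l./2.
Proof.
move=> full le_cb; rewrite ltn_neqAle le_cb andbT; apply: contraTneq isT => eq_cb.
by move: (odd_bin2 l); rewrite -full eq_cb !oddD; case: (odd b); case: (odd l./2).
Qed.

Section Within.
Variable T : finType.
Implicit Types (X Y : {set {set T}}) (K L e f : {set T}).

Definition within K X := [set f in X | f \subset K].

Definition nonedges K X := [set f : {set T} | [&& #|f| == 2, f \subset K & f \notin X]].

Lemma card_within_setU1 K X e :
  e \notin X -> #|within K (e |: X)| = #|within K X| + (e \subset K).
Proof.
move=> eX; case eK: (e \subset K).
  have -> : within K (e |: X) = e |: within K X.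
    by apply/setP => f; rewrite !inE; case: (f =P e) => [-> | _] //; rewrite eK andbT.
  by rewrite cardsU1 inE (negbTE eX) addnC.
rewrite addn0; apply: eq_card => f; rewrite !inE.
by case: (f =P e) => [-> | _] //; rewrite eK !andbF.
Qed.

Lemma card_withinD K X Y :
  Y \subset X -> #|within K X| = #|within K Y| + #|within K (X :\: Y)|.
Proof.
move=> YX; rewrite -(cardsID Y (within K X)); congr (_ + _); apply: eq_card => f.
  rewrite !inE; case: (boolP (f \in Y)) => [fY | _]; last by rewrite andbF.
  by rewrite (subsetP YX f fY) andbT.
by rewrite !inE andbA.
Qed.

Lemma pair_subsetD K L f : #|f| = 2 -> f \subset L -> (f \subset K :\: L) = false.
Proof.
move=> /eqP/cards2P [x [y [_ ->]]]; rewrite !subUset !sub1set !inE => /andP [xL _].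
by rewrite xL.
Qed.

Lemma leq_card_within_setD K L X : L \subset K -> {in X, forall f, #|f| = 2} ->
  #|within L X| + #|within (K :\: L) X| <= #|within K X|.
Proof.
move=> LK X2; rewrite -cardsUI -[X in _ <= X]addn0.
have -> : within L X :&: within (K :\: L) X = set0.
  apply/setP => f; rewrite !inE; apply/negP => /and3P [/andP [fX fL] _].
  by rewrite (pair_subsetD K (X2 f fX) fL).
rewrite cards0 leq_add2r; apply: subset_leq_card; apply/subsetP => f.
rewrite !inE => /orP [] /andP [-> fsub] //=; first exact: subset_trans fsub LK.
by apply: subset_trans fsub _; apply: subsetDl.
Qed.

Lemma card_within_nonedges K X : {in X, forall f, #|f| = 2} ->
  #|within K X| + #|nonedges K X| = 'C(#|K|, 2).
Proof.
move=> X2; rewrite -cards_draws -(cardsID X [set f : {set T} | f \subset K & #|f| == 2]).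
congr (_ + _); apply: eq_card => f.
  rewrite !inE; case: (boolP (f \in X)) => [fX | _]; last by rewrite andbF.
  by rewrite (X2 f fX) /= !andbT.
by rewrite !inE; case: (#|f| == 2); case: (f \subset K); case: (f \in X).
Qed.

End Within.

Section ComponentGraph.
Variable n : nat.
Implicit Types (G H : {set {set 'I_n}}) (K L e f : {set 'I_n}) (x y : 'I_n).

Lemma gadj_sym G : symmetric (gadj G).
Proof. by move=> x y; rewrite /gadj eq_sym setUC. Qed.

Lemma connect_sym_gadj G : connect_sym (gadj G).
Proof. exact/sym_connect_sym/gadj_sym. Qed.

Lemma closed_vcomp G x : closed (gadj G) (vcomp G x).
Proof. by move=> y z /(connect_closed (connect_sym_gadj G) x); rewrite !inE. Qed.

Lemma closed_compE G e : closed (gadj G) (compE G e).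
Proof.
apply: (intro_closed (connect_sym_gadj G)) => y z yz; rewrite !inE.
case/exists_inP => x xe xy; apply/exists_inP; exists x => //.
exact: connect_trans xy (connect1 yz).
Qed.

Lemma sub_compE G e : e \subset compE G e.
Proof. by apply/subsetP => x xe; rewrite inE; apply/exists_inP; exists x. Qed.

Lemma compE_sub G K e : closed (gadj G) K -> e \subset K -> compE G e \subset K.
Proof.
move=> clK eK; apply/subsetP => y; rewrite inE => /exists_inP [x xe xy].
by rewrite -(closed_connect clK xy) (subsetP eK).
Qed.

Lemma closed_subgraph G H K : G \subset H -> closed (gadj H) K -> closed (gadj G) K.
Proof. by move=> GH clK x y /andP [xy xyG]; apply: clK; rewrite /gadj xy (subsetP GH). Qed.

Lemma closedD G K L : closed (gadj G) K -> closed (gadj G) L -> closed (gadj G) (K :\: L).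
Proof. by move=> clK clL x y xy; rewrite !inE (clK _ _ xy) (clL _ _ xy). Qed.

Lemma leq_card_within_closed G K L : closed (gadj G) L -> {in G, forall f, #|f| = 2} ->
  #|within K G| <= #|within L G| + #|within (K :\: L) G|.
Proof.
move=> clL G2; apply: leq_trans (leq_card_setU _ _); apply: subset_leq_card.
apply/subsetP => f; rewrite !inE => /andP [fG fK]; rewrite fG /=.
have /eqP/cards2P [x [y [xy def_f]]] := G2 f fG.
have {}xy : gadj G x y by rewrite /gadj xy -def_f.
move: fK; rewrite def_f !subUset !sub1set !inE (clL _ _ xy) => /andP [-> ->].
by case: (y \in L).
Qed.

End ComponentGraph.

Section Play.
Variables (n : nat) (cstart : bool) (s : seq {set 'I_n}).
Hypothesis s_valid : valid_play s.
Hypothesis s_blocker : blocker_rule cstart s.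
Implicit Types (K f : {set 'I_n}).

Definition bgraph k := claimed s k :\: cgraph cstart s k.

Lemma isCS k : isC cstart k.+1 = ~~ isC cstart k.
Proof. by rewrite /isC /=; case: cstart; case: (odd k). Qed.

Lemma claimedS k : k < size s -> claimed s k.+1 = nth set0 s k |: claimed s k.
Proof.
by move=> ks; apply/setP => f; rewrite /claimed (take_nth set0 ks) !inE mem_rcons in_cons.
Qed.

Lemma cgraph0 : cgraph cstart s 0 = set0.
Proof. by apply/setP => f; rewrite inE; apply/imsetP => -[i]; rewrite inE ltn0. Qed.

Lemma cgraphS k : k < size s -> cgraph cstart s k.+1 =
  if isC cstart k then nth set0 s k |: cgraph cstart s k else cgraph cstart s k.
Proof.
move=> ks; apply/setP => f; apply/imsetP/idP => [[i] | ].
  rewrite inE ltnS leq_eqVlt => /andP [/orP [/eqP ik | ik] iC] ->.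
    by rewrite -ik iC setU11.
  have iG : nth set0 s i \in cgraph cstart s k by apply/imsetP; exists i; rewrite // inE ik.
  by case: ifP => _; rewrite ?in_setU1 iG ?orbT.
have old : f \in cgraph cstart s k -> exists2 i : 'I_(size s),
    i \in [set i : 'I_(size s) | (val i < k.+1) && isC cstart i] & f = nth set0 s i.
  by case/imsetP => i; rewrite !inE => /andP [ik iC] ->; exists i; rewrite // inE iC ltnW.
case: ifP => kC; last exact: old.
case/setU1P => [-> | ]; last exact: old.
by exists (Ordinal ks) => //; rewrite inE /= ltnSn.
Qed.

Lemma cgraph_sub_claimed k : cgraph cstart s k \subset claimed s k.
Proof.
apply/subsetP => f /imsetP [i]; rewrite inE => /andP [ik _] ->; rewrite inE.
by rewrite -(nth_take set0 ik) mem_nth // size_take_min leq_min ik ltn_ord.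
Qed.

Lemma claimed_pairs k : {in claimed s k, forall f, #|f| = 2}.
Proof. by move=> f; rewrite inE => /mem_take; apply: s_valid.2. Qed.

Lemma cgraph_pairs k : {in cgraph cstart s k, forall f, #|f| = 2}.
Proof. by move=> f /(subsetP (cgraph_sub_claimed k)); apply: claimed_pairs. Qed.

Lemma nth_notin_claimed k : k < size s -> nth set0 s k \notin claimed s k.
Proof.
move=> ks; rewrite inE; have := s_valid.1.
rewrite -{1}(cat_take_drop k s) cat_uniq => /and3P [_ /hasPn take_drop _].
have -> : nth set0 s k = nth set0 (drop k s) 0 by rewrite nth_drop addn0.
by apply/take_drop/mem_nth; rewrite size_drop subn_gt0.
Qed.

Lemma nth_notin_cgraph k : k < size s -> nth set0 s k \notin cgraph cstart s k.
Proof. by move/nth_notin_claimed; apply: contra; apply: (subsetP (cgraph_sub_claimed k)). Qed.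

Lemma bgraphS k : k < size s ->
  bgraph k.+1 = if isC cstart k then bgraph k else nth set0 s k |: bgraph k.
Proof.
move=> ks; have eD := nth_notin_claimed ks; have eG := nth_notin_cgraph ks.
rewrite /bgraph claimedS // cgraphS //; apply/setP => f.
by case: ifP => _; rewrite !(in_setD, in_setU1); case: (f =P nth set0 s k) => [-> | _];
  rewrite ?(negbTE eD, negbTE eG, andbF).
Qed.

Definition pending k K : bool :=
  if k is i.+1 then
    [&& isC cstart i, nth set0 s i \subset K &
        nonedges (compE (cgraph cstart s k) (nth set0 s i)) (claimed s k) != set0]
  else false.

Lemma pending_isC k K : isC cstart k -> pending k K = false.
Proof. by case: k => // k; rewrite isCS /pending => /negbTE ->. Qed.

Lemma pending_le_nonedges k K : closed (gadj (cgraph cstart s k)) K ->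
  pending k K <= #|nonedges K (claimed s k)|.
Proof.
case: k => // k clK; case pend: (pending k.+1 K) => //.
case/and3P: pend => _ eK /set0Pn [f].
rewrite !inE => /and3P [f2 fL fD]; rewrite lt0n cards_eq0; apply/set0Pn; exists f.
by rewrite !inE f2 fD (subset_trans fL (compE_sub clK eK)).
Qed.

Lemma pending_answered k K : k < size s -> closed (gadj (cgraph cstart s k)) K ->
  pending k K -> nth set0 s k \subset K.
Proof.
case: k => // k ks clK /and3P [kC eK /set0Pn [f]]; rewrite inE => fL.
exact: subset_trans (s_blocker ks kC (ex_intro _ f fL)) (compE_sub clK eK).
Qed.

Definition invariant k := forall K, closed (gadj (cgraph cstart s k)) K ->
  #|within K (cgraph cstart s k)| <= #|within K (bgraph k)| + #|K|./2 + pending k K.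

Lemma invariant0 : invariant 0.
Proof.
move=> K _; suff -> : within K (cgraph cstart s 0) = set0 by rewrite cards0.
by apply/setP => f; rewrite cgraph0 !inE.
Qed.

Lemma bgraph_pairs k : {in bgraph k, forall f, #|f| = 2}.
Proof. by move=> f /setDP [/claimed_pairs]. Qed.

Lemma invariant_blocker_move k : k < size s -> ~~ isC cstart k ->
  invariant k -> invariant k.+1.
Proof.
move=> ks kB inv K; rewrite cgraphS // bgraphS // (negbTE kB) => clK.
have -> : pending k.+1 K = false by rewrite /pending (negbTE kB).
have eB : nth set0 s k \notin bgraph k.
  by apply: contra (nth_notin_claimed ks); apply/subsetP/subsetDl.
rewrite card_within_setU1 //; have := inv K clK; have := pending_answered ks clK.
by case: (pending k K) => [/(_ isT) -> | _] /=; lia.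
Qed.

Lemma invariant_component_filled k K : k < size s -> isC cstart k -> invariant k ->
  closed (gadj (cgraph cstart s k.+1)) K -> nth set0 s k \subset K -> ~~ pending k.+1 K ->
  #|within K (cgraph cstart s k.+1)| <= #|within K (bgraph k.+1)| + #|K|./2.
Proof.
move=> ks kC inv clK eK; rewrite /pending kC eK negbK => /eqP filled.
set e := nth set0 s k in eK filled *; set L := compE _ e in filled.
have GS : cgraph cstart s k.+1 = e |: cgraph cstart s k by rewrite cgraphS // kC.
have BS : bgraph k.+1 = bgraph k by rewrite bgraphS // kC.
have eG : e \notin cgraph cstart s k := nth_notin_cgraph ks.
have clL : closed (gadj (cgraph cstart s k.+1)) L by apply: closed_compE.
have eL : e \subset L by apply: sub_compE.
have LK : L \subset K := compE_sub clK eK.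
have GG' : cgraph cstart s k \subset cgraph cstart s k.+1 by rewrite GS subsetUr.
have clLG := closed_subgraph GG' clL; have clKG := closed_subgraph GG' clK.
have eKL := pair_subsetD K (s_valid.2 e (mem_nth set0 ks)) eL.
have split := leq_card_within_closed K clL (@cgraph_pairs k.+1).
rewrite GS !card_within_setU1 // eK eL eKL in split.
have full := card_within_nonedges L (@claimed_pairs k.+1).
rewrite filled cards0 addn0 (card_withinD L (cgraph_sub_claimed k.+1)) -/(bgraph k.+1) in full.
rewrite GS card_within_setU1 // eL BS in full.
have IHL := inv L clLG; have IHKL := inv (K :\: L) (closedD clKG clLG).
rewrite !pending_isC // !addn0 in IHL IHKL.
have parity := bin2_parity_lt (etrans (addnAC _ _ _) full) IHL.
have splitB := leq_card_within_setD LK (@bgraph_pairs k).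
rewrite GS card_within_setU1 // eK BS -(cardsID L K) (setIidPr LK) halfD; lia.
Qed.

Lemma invariant_constructor_move k : k < size s -> isC cstart k ->
  invariant k -> invariant k.+1.
Proof.
move=> ks kC inv K clK; set e := nth set0 s k.
have [/andP [eK unpend] | loose] := boolP ((e \subset K) && ~~ pending k.+1 K).
  by rewrite (negbTE unpend) addn0; apply: invariant_component_filled.
have GG' : cgraph cstart s k \subset cgraph cstart s k.+1 by rewrite cgraphS // kC subsetUr.
have := inv K (closed_subgraph GG' clK); rewrite pending_isC // addn0.
rewrite cgraphS // bgraphS // kC card_within_setU1 ?nth_notin_cgraph //.
by move: loose; case: (e \subset K); case: (pending k.+1 K) => /=; lia.
Qed.

Lemma invariant_play k : k <= size s -> invariant k.
Proof.
elim: k => [_ | k IH ks]; first exact: invariant0.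
have [kC | kB] := boolP (isC cstart k).
  exact: invariant_constructor_move (IH (ltnW ks)).
exact: invariant_blocker_move (IH (ltnW ks)).
Qed.

End Play.

Theorem lemma2p4 (n : nat) (cstart : bool) (s : seq {set 'I_n}) :
  valid_play s -> blocker_rule cstart s ->
  forall x : 'I_n,
    let G := cgraph cstart s (size s) in
    let C := vcomp G x in
    'C(#|C|, 2) - #|C| ./2 <=
      2 * #|[set f : {set 'I_n} | [&& #|f| == 2, f \subset C & f \notin G]]|.
Proof.
move=> valid blocker x /=; set C := vcomp _ x.
have clC : closed (gadj (cgraph cstart s (size s))) C by apply: closed_vcomp.
have inv := invariant_play valid blocker (leqnn (size s)) clC.
have pend := pending_le_nonedges clC.
have claimedC := card_within_nonedges C (claimed_pairs valid (k := size s)).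
have cgraphC := card_within_nonedges C (@cgraph_pairs _ cstart _ valid (size s)).
have claimed_split := card_withinD C (cgraph_sub_claimed cstart s (size s)).
rewrite -/(bgraph cstart s (size s)) in claimed_split.
set r := #|C| in inv claimedC cgraphC *; set NG := #|nonedges C _| in cgraphC *.
lia.
Qed.
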